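(* Let $n \geq 1$. If $\Psi : \mathbf{R}^n \to \mathbf{R}^n$ is a primitive linear map (with respect to the Lorentz cone $\mathcal{L}_n$), then $\gamma(\Psi) \leq n$. Moreover, there exists a primitive linear map $\Psi : \mathbf{R}^n \to \mathbf{R}^n$ such that $\gamma(\Psi) = n$.
   Context: The $n$-dimensional Lorentz cone is $\mathcal{L}_n = \{(x_1,\dots,x_n) \in \mathbf{R}^n : x_n \geq (x_1^2+\dots+x_{n-1}^2)^{1/2}\}$, with interior $\mathrm{int}(\mathcal{L}_n)$. A linear map $\Psi : \mathbf{R}^n \to \mathbf{R}^n$ is positive if $\Psi(\mathcal{L}_n) \subset \mathcal{L}_n$, strictly positive if $\Psi(\mathcal{L}_n \setminus \{0\}) \subset \mathrm{int}(\mathcal{L}_n)$, and primitive if it is positive and there exists an integer $k \geq 1$ such that $\Psi^k$ is strictly positive. For primitive $\Psi$, $\gamma(\Psi)$ (the primitivity index) is the smallest such $k$. *)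

From HB Require Import structures.
From mathcomp Require Import all_boot all_order all_algebra.
From mathcomp Require Import all_classical all_reals all_analysis.
Set Implicit Arguments. Unset Strict Implicit. Unset Printing Implicit Defensive.
Import Order.TTheory GRing.Theory Num.Theory.
Import numFieldNormedType.Exports.
Local Open Scope classical_set_scope.
Local Open Scope ring_scope.

(* R^n is represented by column vectors 'cV[R]_n; coordinate x_{i+1} is x i 0.
   The last coordinate x_n is the one with index n.-1. *)

Definition lorentz (R : realType) (n : nat) : set 'cV[R]_n :=
  [set x | forall i : 'I_n, val i = n.-1 ->
     Num.sqrt (\sum_(j < n | val j != n.-1) (x j 0) ^+ 2) <= x i 0].

Definition positive_map (R : realType) (n : nat) (A : 'M[R]_n) : Prop :=
  forall x, @lorentz R n x -> @lorentz R n (A *m x).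

Definition strictly_positive_map (R : realType) (n : nat) (A : 'M[R]_n) : Prop :=
  forall x, @lorentz R n x -> x != 0 -> (interior (@lorentz R n)) (A *m x).

Definition primitive_map (R : realType) (n : nat) (A : 'M[R]_n) : Prop :=
  positive_map A /\ exists k : nat, (1 <= k)%N /\ strictly_positive_map (A ^+ k).

Definition is_primitivity_index (R : realType) (n : nat) (A : 'M[R]_n) (k : nat) : Prop :=
  [/\ (1 <= k)%N, strictly_positive_map (A ^+ k) &
      forall j : nat, (1 <= j)%N -> (j < k)%N -> ~ strictly_positive_map (A ^+ j)].

From HB Require Import structures.
From mathcomp Require Import all_boot all_order all_algebra.
From mathcomp Require Import all_classical all_reals all_analysis.
From mathcomp Require Import ring lra zify.
Set Implicit Arguments. Unset Strict Implicit. Unset Printing Implicit Defensive.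
Import Order.TTheory GRing.Theory Num.Theory.
Import numFieldNormedType.Exports.
Local Open Scope classical_set_scope.
Local Open Scope ring_scope.

(* Write t(x) for the last coordinate of x and q(x) = t(x)^2 - (x_1^2 + ... +
   x_{n-1}^2) for the Lorentz quadratic form, with polar form b; then
   L_n = {t >= 0, q >= 0} and its interior is {t > 0, q > 0}.
   Let A be primitive with A^k strictly positive, and let x in L_n \ 0 be such
   that x_n = A^n x lies on the boundary.  A primitive map sends interior points
   to interior points: otherwise b(Ay, A.) would vanish identically, although
   b(Ay, A^k (Ay)) > 0.  Hence x_j = A^j x is isotropic for every j <= n.  If y
   and Ay are isotropic, positivity of A forces b(Ay, Az) = mu b(y, z) for all
   z; along the orbit the factor mu does not depend on j, because
   b(x_j, x_{j+1}) = 0 would make x_j an isotropic eigenvector.  The vectors y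
   with b(Ay, A.) = mu b(y, .) form a subspace, which contains x_0, ..., x_{n-1}
   and therefore, by Cayley-Hamilton, every x_j.  Thus q(x_{j+1}) = mu q(x_j),
   every x_j is isotropic, and A^k x cannot be interior.
   The bound is attained by a map that acts on x_2, ..., x_{n-1} as a shift
   register fed by t - x_1, so that the isotropic vector e_1 + e_n needs n
   steps to enter the interior. *)

Section RealFieldFacts.
Variable R : realFieldType.

Lemma affine_gt0_near0 (a b : R) : 0 < a ->
  exists2 d, 0 < d & forall s, `|s| <= d -> 0 < a + s * b.
Proof.
move=> a_gt0; have nb_gt0 : 0 < `|b| + 1 by rewrite ltr_wpDl.
exists (a / (`|b| + 1)) => [|s s_le]; first by rewrite divr_gt0.
have : `|s * b| < a.
  rewrite normrM; apply: le_lt_trans (ler_wpM2r (normr_ge0 b) s_le) _.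
  by rewrite mulrAC ltr_pdivrMr // ltr_pM2l // ltrDl.
by case/ltr_normlP; lra.
Qed.

Lemma quad_nonneg_right (a c d : R) : 0 < d ->
  (forall s, 0 < s -> s <= d -> 0 <= s * a + s ^+ 2 * c) -> 0 <= a.
Proof.
move=> d_gt0 h; rewrite leNgt; apply/negP => a_lt0.
have na_gt0 : 0 < - a by rewrite oppr_gt0.
have [e e_gt0 he] := affine_gt0_near0 (- c) na_gt0.
pose s := Num.min d e.
have s_gt0 : 0 < s by rewrite lt_min d_gt0.
have s_le : s <= d by rewrite ge_min lexx.
have := h s s_gt0 s_le.
have := he s; rewrite gtr0_norm // ge_min lexx orbT => /(_ isT).
nra.
Qed.

Lemma quad_nonneg_near0 (a c d : R) : 0 < d ->
  (forall s, `|s| <= d -> 0 <= s * a + s ^+ 2 * c) -> a = 0.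
Proof.
move=> d_gt0 h; apply/eqP; rewrite eq_le; apply/andP; split.
  rewrite -oppr_ge0; apply: (quad_nonneg_right (c := c) d_gt0) => s s_gt0 s_le.
  by have := h (- s); rewrite normrN gtr0_norm // sqrrN mulNr mulrN; apply.
by apply: (quad_nonneg_right d_gt0) => s s_gt0 s_le; apply: h; rewrite gtr0_norm.
Qed.

Lemma proportional_of_nonneg_on_halfspace (V : lmodType R) (phi psi : V -> R) e :
  linear_for *%R phi -> linear_for *%R psi -> 0 < psi e ->
  (forall z, 0 < psi z -> 0 <= phi z) -> forall z, phi z = phi e / psi e * psi z.
Proof.
move=> phi_lin psi_lin psi_e phi_ge0 z.
pose c := psi z / psi e; pose w := z - c *: e.
have z_eq : z = c *: e + w by rewrite addrC subrK.
have psi_w : psi w = 0.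
  by have := psi_lin c e w; rewrite -z_eq divfK ?gt_eqF //; lra.
have phi_w : phi w = 0.
  apply/eqP/negP => /negP phi_w_neq0.
  have := phi_ge0 (- (`|phi e| + 1) / phi w *: w + e).
  rewrite phi_lin psi_lin psi_w mulr0 add0r divfK // => /(_ psi_e).
  by have := ler_norm (phi e); lra.
by rewrite {1}z_eq phi_lin phi_w addr0 /c; ring.
Qed.

End RealFieldFacts.

Section MatrixPowers.
Variables (R : comNzRingType) (m : nat) (A : 'M[R]_m.+1).

Lemma mulmx_exprS j (y : 'cV[R]_m.+1) : A ^+ j.+1 *m y = A *m (A ^+ j *m y).
Proof. by rewrite exprS -mulmxE mulmxA. Qed.

Lemma mulmx_exprSr j (y : 'cV[R]_m.+1) : A ^+ j.+1 *m y = A ^+ j *m (A *m y).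
Proof. by rewrite exprSr -mulmxE mulmxA. Qed.

Lemma mulmx_expr_eigen j (y : 'cV[R]_m.+1) c :
  A *m y = c *: y -> A ^+ j *m y = c ^+ j *: y.
Proof.
move=> Ay; elim: j => [|j IH]; first by rewrite expr0 mul1mx scale1r.
by rewrite mulmx_exprS IH -scalemxAr Ay scalerA exprSr.
Qed.

End MatrixPowers.

Section OrbitSpan.
Variables (F : fieldType) (m : nat) (A : 'M[F]_m.+1).

Lemma expr_char_poly_mod j :
  A ^+ j = \sum_(i < m.+1) ('X^j %% char_poly A)`_i *: A ^+ i.
Proof.
set r := 'X^j %% char_poly A.
have size_r : (size r <= m.+1)%N.
  by rewrite -ltnS -(size_char_poly A) ltn_modp -size_poly_eq0 size_char_poly.
have r_poly : r = \poly_(i < m.+1) r`_i.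
  apply/polyP => i; rewrite coef_poly; case: ltnP => // i_ge.
  by rewrite nth_default // (leq_trans size_r).
have -> : A ^+ j = horner_mx A 'X^j by rewrite rmorphXn /= horner_mx_X.
rewrite {1}(divp_eq 'X^j (char_poly A)) -/r.
rewrite rmorphD rmorphM /= Cayley_Hamilton mulr0 add0r {1}r_poly poly_def.
rewrite raddf_sum /=; apply: eq_bigr => i _.
by rewrite horner_mxZ rmorphXn /= horner_mx_X.
Qed.

Lemma orbit_in_subspace (P : 'cV[F]_m.+1 -> Prop) (x : 'cV[F]_m.+1) :
  P 0 -> (forall a u v, P u -> P v -> P (a *: u + v)) ->
  (forall i, (i < m.+1)%N -> P (A ^+ i *m x)) -> forall j, P (A ^+ j *m x).
Proof.
move=> P0 P_lin P_orbit j; rewrite expr_char_poly_mod mulmx_suml.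
apply: (big_ind P P0) => [u v Pu Pv|i _]; first by rewrite -[u]scale1r; apply: P_lin.
by rewrite -scalemxAl -[_ *: _]addr0; apply: P_lin => //; apply: P_orbit.
Qed.

End OrbitSpan.

Section LorentzForm.
Variables (R : realType) (m : nat).
Local Notation V := 'cV[R]_m.+1.
Local Notation L := (@lorentz R m.+1).

Definition lastc (z : V) : R := z ord_max 0.

Definition e_last : V := delta_mx ord_max 0.

Definition lform (y z : V) : R :=
  \sum_i (if i == ord_max then 1 else -1) * (y i 0 * z i 0).

Definition lquad (z : V) : R := lform z z.

Definition spatial_sq (z : V) : R := \sum_(j < m.+1 | val j != m) z j 0 ^+ 2.

Lemma lastcD y z : lastc (y + z) = lastc y + lastc z.
Proof. by rewrite /lastc mxE. Qed.

Lemma lastcZ a z : lastc (a *: z) = a * lastc z.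
Proof. by rewrite /lastc mxE. Qed.

Lemma lastc_e_last : lastc e_last = 1.
Proof. by rewrite /lastc mxE !eqxx. Qed.

Lemma lformC y z : lform y z = lform z y.
Proof. by apply: eq_bigr => i _; rewrite [y i 0 * _]mulrC. Qed.

Lemma lformDr y z w : lform y (z + w) = lform y z + lform y w.
Proof. by rewrite /lform -big_split; apply: eq_bigr => i _; rewrite !mxE !mulrDr. Qed.

Lemma lformZr y a z : lform y (a *: z) = a * lform y z.
Proof. by rewrite /lform mulr_sumr; apply: eq_bigr => i _; rewrite !mxE; ring. Qed.

Lemma lformDl y z w : lform (z + w) y = lform z y + lform w y.
Proof. by rewrite lformC lformDr !(lformC y). Qed.

Lemma lformZl y a z : lform (a *: z) y = a * lform z y.
Proof. by rewrite lformC lformZr lformC. Qed.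

Lemma lform0l y : lform 0 y = 0.
Proof. by rewrite -(scale0r 0) lformZl mul0r. Qed.

Lemma lform_linear y : linear_for *%R (lform y).
Proof. by move=> a u v; rewrite lformDr lformZr. Qed.

Lemma lform_e_last y : lform y e_last = lastc y.
Proof.
rewrite /lform (bigD1 ord_max) //= big1 ?addr0 => [|i /negbTE i_neq].
  by rewrite eqxx mul1r mxE !eqxx mulr1.
by rewrite mxE i_neq !mulr0.
Qed.

Lemma lquad_e_last : lquad e_last = 1.
Proof. by rewrite /lquad lform_e_last lastc_e_last. Qed.

Lemma lquadZ a z : lquad (a *: z) = a ^+ 2 * lquad z.
Proof. by rewrite /lquad lformZl lformZr mulrA -expr2. Qed.

Lemma lquadDZ y s z :
  lquad (y + s *: z) = lquad y + s * (2 * lform y z) + s ^+ 2 * lquad z.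
Proof. by rewrite /lquad !lformDl !lformDr !lformZl !lformZr (lformC z y); ring. Qed.

Lemma lquad_lincomb a b v w :
  lquad (a *: v + b *: w) = a ^+ 2 * lquad v + 2 * a * b * lform v w + b ^+ 2 * lquad w.
Proof. by rewrite lquadDZ lquadZ lformZl; ring. Qed.

Lemma lquadE z : lquad z = lastc z ^+ 2 - spatial_sq z.
Proof.
rewrite /lquad /lform (bigD1 ord_max) //= eqxx mul1r -expr2 -sumrN.
congr (_ + _); apply: eq_big => [i|i]; first by rewrite -val_eqE.
by move/negbTE => ->; rewrite mulN1r expr2.
Qed.

Lemma spatial_sq_ge0 z : 0 <= spatial_sq z.
Proof. by apply: sumr_ge0 => i _; apply: sqr_ge0. Qed.

Lemma lorentzE z : L z <-> 0 <= lastc z /\ 0 <= lquad z.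
Proof.
rewrite lquadE subr_ge0; split=> [/(_ ord_max erefl) z_L | [t_ge0 q_ge0] i /= i_max].
  have t_ge0 : 0 <= lastc z by apply: le_trans z_L; apply: sqrtr_ge0.
  split=> //; rewrite -(sqr_sqrtr (spatial_sq_ge0 z)).
  by rewrite ler_sqr // ?nnegrE ?sqrtr_ge0.
have -> : i = ord_max by apply: val_inj.
change (Num.sqrt (spatial_sq z) <= lastc z).
by rewrite -(ger0_norm t_ge0) -sqrtr_sqr ler_sqrt ?sqr_ge0.
Qed.

Lemma lquad_le0 z : lastc z = 0 -> lquad z <= 0.
Proof. by move=> t0; rewrite lquadE t0 expr0n /= sub0r oppr_le0 spatial_sq_ge0. Qed.

Lemma lorentz_eq0 z : lastc z = 0 -> 0 <= lquad z -> z = 0.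
Proof.
move=> t0; rewrite lquadE t0 expr0n /= sub0r oppr_ge0 => s_le0.
have /psumr_eq0P z_eq0 : spatial_sq z = 0 by apply/eqP; rewrite eq_le s_le0 spatial_sq_ge0.
apply/matrixP => i j; rewrite ord1 mxE.
have [i_max|i_neq] := eqVneq (val i) m.
  by have -> : i = ord_max by apply: val_inj.
by apply/eqP; rewrite -sqrf_eq0; apply/eqP/z_eq0 => // l _; apply: sqr_ge0.
Qed.

Lemma lastc_gt0 z : L z -> z != 0 -> 0 < lastc z.
Proof.
move=> /lorentzE [t_ge0 q_ge0] z_neq0; rewrite lt_neqAle t_ge0 andbT.
by apply: contra_neq z_neq0 => /esym t0; apply: lorentz_eq0.
Qed.

Lemma lorentz_line y z : interior L y ->
  exists2 d, 0 < d & forall s, `|s| <= d -> L (y + s *: z).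
Proof.
move=> y_int.
have line_cvg : (fun s : R => y + s *: z) @ nbhs (0 : R) --> y.
  rewrite -[X in _ --> X]addr0 -(scale0r z).
  by apply: cvgD; [exact: cvg_cst | apply: cvgZr_tmp; exact: cvg_id].
have /nbhs_ballP [d /= d_gt0 hd] := line_cvg _ y_int.
exists (d / 2) => [|s s_le]; first by rewrite divr_gt0.
apply: hd; rewrite -ball_normE /= sub0r normrN (le_lt_trans s_le) //.
by rewrite ltr_pdivrMr // ltr_pMr // ltr1n.
Qed.

Lemma interior_lorentzE z : interior L z <-> 0 < lastc z /\ 0 < lquad z.
Proof.
split=> [z_int | [t_gt0 q_gt0]].
  have [d d_gt0 hd] := lorentz_line e_last z_int.
  have /lorentzE := hd (- d) (ltac:(by rewrite normrN gtr0_norm)).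
  rewrite lquadDZ lastcD lastcZ lastc_e_last lform_e_last lquad_e_last sqrrN.
  by move=> [t_ge q_ge]; split; nra.
have lastc_cvg : lastc y @[y --> z] --> lastc z by apply: coord_continuous.
have lquad_cvg : lquad y @[y --> z] --> lquad z.
  rewrite /lquad /lform; apply: (cvg_big add_continuous (F := nbhs z)) => i _.
  by apply: cvgMl_tmp; apply: cvgM; apply: coord_continuous.
rewrite /interior /=; near=> y; apply/lorentzE; split; apply: ltW; near: y.
  exact: cvgr_gt lastc_cvg _ t_gt0.
exact: cvgr_gt lquad_cvg _ q_gt0.
Unshelve. all: by end_near.
Qed.

Lemma interior_lorentz_neq0 z : interior L z -> z != 0.
Proof.
move=> /interior_lorentzE [t_gt0 _]; apply: contraTneq t_gt0 => ->.
by rewrite /lastc mxE ltxx.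
Qed.

Lemma lform_gt0 v w : L v -> v != 0 -> interior L w -> 0 < lform v w.
Proof.
move=> v_L v_neq0 /interior_lorentzE [tw_gt0 qw_gt0].
have tv_gt0 := lastc_gt0 v_L v_neq0; have [_ qv_ge0] := (lorentzE v).1 v_L.
have := lquad_le0 (z := lastc w *: v + (- lastc v) *: w).
rewrite lastcD !lastcZ lquad_lincomb => /(_ (ltac:(ring))).
have : 0 < lastc v ^+ 2 * lquad w by rewrite mulr_gt0 ?exprn_gt0.
have : 0 <= lastc w ^+ 2 * lquad v by rewrite mulr_ge0 ?sqr_ge0.
have : 0 < lastc w * lastc v by rewrite mulr_gt0.
nra.
Qed.

Lemma isotropic_orthogonal v w : L v -> v != 0 -> L w ->
  lquad v = 0 -> lquad w = 0 -> lform v w = 0 -> w = (lastc w / lastc v) *: v.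
Proof.
move=> v_L v_neq0 w_L qv qw vw.
have tv_gt0 := lastc_gt0 v_L v_neq0.
have := lorentz_eq0 (z := lastc w *: v + (- lastc v) *: w).
rewrite lastcD !lastcZ lquad_lincomb qv qw vw !mulr0 !addr0 => /(_ (ltac:(ring)) (lexx 0)).
move/eqP; rewrite scaleNr subr_eq0 => /eqP w_eq.
by rewrite mulrC -scalerA w_eq scalerA mulVf ?scale1r ?gt_eqF.
Qed.

Lemma lorentz_ray y z : L y -> y != 0 -> 0 < lform y z ->
  exists2 d, 0 < d & forall s, 0 < s -> s <= d -> L (y + s *: z).
Proof.
move=> y_L y_neq0 yz_gt0; have [_ qy_ge0] := (lorentzE y).1 y_L.
have two_yz_gt0 : 0 < 2 * lform y z by rewrite mulr_gt0.
have [d1 d1_gt0 h1] := affine_gt0_near0 (lquad z) two_yz_gt0.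
have [d2 d2_gt0 h2] := affine_gt0_near0 (lastc z) (lastc_gt0 y_L y_neq0).
exists (Num.min d1 d2) => [|s s_gt0 s_le]; first by rewrite lt_min d1_gt0.
move: s_le; rewrite le_min => /andP [s_le1 s_le2].
have := h1 s; have := h2 s; rewrite gtr0_norm // s_le1 s_le2 => /(_ isT) t_gt0 /(_ isT) q_gt0.
apply/lorentzE; rewrite lastcD lastcZ lquadDZ; split; first exact: ltW.
by nra.
Qed.

End LorentzForm.

Section PositiveMap.
Variables (R : realType) (m : nat) (A : 'M[R]_m.+1).
Local Notation V := 'cV[R]_m.+1.
Local Notation L := (@lorentz R m.+1).

Definition conformal_at (mu : R) (y : V) :=
  forall z, lform (A *m y) (A *m z) = mu * lform y z.

Lemma conformal_at0 mu : conformal_at mu 0.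
Proof. by move=> z; rewrite mulmx0 !lform0l mulr0. Qed.

Lemma conformal_at_lincomb mu a u v :
  conformal_at mu u -> conformal_at mu v -> conformal_at mu (a *: u + v).
Proof.
move=> conf_u conf_v z.
by rewrite mulmxDr -scalemxAr !lformDl !lformZl conf_u conf_v; ring.
Qed.

Hypothesis A_pos : positive_map A.

Lemma positive_pow j y : L y -> L (A ^+ j *m y).
Proof.
move=> y_L; elim: j => [|j IH]; first by rewrite expr0 mul1mx.
by rewrite mulmx_exprS; apply: A_pos.
Qed.

Lemma isotropic_conformal y : L y -> y != 0 ->
  lquad y = 0 -> lquad (A *m y) = 0 -> exists mu, conformal_at mu y.
Proof.
move=> y_L y_neq0 y_iso Ay_iso.
have halfspace z : 0 < lform y z -> 0 <= lform (A *m y) (A *m z).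
  move=> yz_gt0; have [d d_gt0 hd] := lorentz_ray y_L y_neq0 yz_gt0.
  rewrite -(pmulr_rge0 _ (ltr0n _ 2)).
  apply: (quad_nonneg_right (c := lquad (A *m z)) d_gt0) => s s_gt0 s_le.
  have /lorentzE [_] := A_pos (hd s s_gt0 s_le).
  by rewrite mulmxDr -scalemxAr lquadDZ Ay_iso add0r.
exists (lform (A *m y) (A *m e_last R m) / lform y (e_last R m)).
apply: (proportional_of_nonneg_on_halfspace (phi := fun z => lform (A *m y) (A *m z))).
- by move=> a u v; rewrite mulmxDr -scalemxAr lformDr lformZr.
- exact: lform_linear.
- by rewrite lform_e_last; apply: lastc_gt0.
- exact: halfspace.
Qed.

End PositiveMap.

Section PrimitiveMap.
Variables (R : realType) (m : nat) (A : 'M[R]_m.+1) (k : nat).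
Local Notation L := (@lorentz R m.+1).
Hypotheses (A_pos : positive_map A) (k_gt0 : (0 < k)%N).
Hypothesis Ak_strict : strictly_positive_map (A ^+ k).

Lemma primitive_pow_neq0 j y : L y -> y != 0 -> A ^+ j *m y != 0.
Proof.
move=> y_L y_neq0; elim: j => [|j IH]; first by rewrite expr0 mul1mx.
apply/eqP => Ajy_eq0.
have /interior_lorentzE [_] := Ak_strict (positive_pow A_pos j y_L) IH.
case: k k_gt0 => // k' _.
by rewrite mulmx_exprSr -mulmx_exprS Ajy_eq0 mulmx0 /lquad lform0l ltxx.
Qed.

Lemma primitive_isotropic_eigen y c : L y -> y != 0 -> lquad y = 0 -> A *m y != c *: y.
Proof.
move=> y_L y_neq0 y_iso; apply/eqP => Ay_eq.
have /interior_lorentzE [_] := Ak_strict y_L y_neq0.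
by rewrite (mulmx_expr_eigen k Ay_eq) lquadZ y_iso mulr0 ltxx.
Qed.

Lemma primitive_interior y : interior L y -> interior L (A *m y).
Proof.
move=> y_int; have y_neq0 := interior_lorentz_neq0 y_int.
have [y_t y_q] := (interior_lorentzE y).1 y_int.
have y_L : L y by apply/lorentzE; split; apply: ltW.
have Ay_L := A_pos y_L.
have Ay_neq0 : A *m y != 0 by have := primitive_pow_neq0 1 y_L y_neq0; rewrite expr1.
apply/interior_lorentzE; split; first exact: lastc_gt0.
have [_ Ay_q] := (lorentzE _).1 Ay_L.
rewrite lt_neqAle Ay_q andbT eq_sym; apply/eqP => Ay_iso.
have Ay_orth z : lform (A *m y) (A *m z) = 0.
  have [d d_gt0 hd] := lorentz_line z y_int.
  suff /eqP : 2 * lform (A *m y) (A *m z) = 0 by rewrite mulf_eq0 pnatr_eq0 => /eqP.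
  apply: (quad_nonneg_near0 (c := lquad (A *m z)) d_gt0) => s s_le.
  have /lorentzE [_] := A_pos (hd s s_le).
  by rewrite mulmxDr -scalemxAr lquadDZ Ay_iso add0r.
have := lform_gt0 Ay_L Ay_neq0 (Ak_strict Ay_L Ay_neq0).
by case: k k_gt0 => // k' _; rewrite mulmx_exprS Ay_orth ltxx.
Qed.

Lemma primitive_pow_interior j y : interior L y -> interior L (A ^+ j *m y).
Proof.
move=> y_int; elim: j => [|j IH]; first by rewrite expr0 mul1mx.
by rewrite mulmx_exprS; apply: primitive_interior.
Qed.

Lemma primitive_orbit_conformal x : L x -> x != 0 ->
  (forall j, (j <= m.+1)%N -> lquad (A ^+ j *m x) = 0) ->
  exists mu, forall j, (j < m.+1)%N -> conformal_at A mu (A ^+ j *m x).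
Proof.
move=> x_L x_neq0 iso.
pose xs j := A ^+ j *m x.
have xsS j : A *m xs j = xs j.+1 by rewrite /xs mulmx_exprS.
have xs_L j : L (xs j) := positive_pow A_pos j x_L.
have xs_neq0 j : xs j != 0 := primitive_pow_neq0 j x_L x_neq0.
have conf j : (j < m.+1)%N -> exists mu, conformal_at A mu (xs j).
  move=> j_lt; apply: isotropic_conformal => //; first exact: iso (ltnW j_lt).
  by rewrite xsS; apply: iso.
have step_neq0 j : (j < m.+1)%N -> lform (xs j) (xs j.+1) != 0.
  move=> j_lt; apply/eqP => orth.
  have := isotropic_orthogonal (xs_L j) (xs_neq0 j) (xs_L j.+1)
    (iso j (ltnW j_lt)) (iso j.+1 j_lt) orth.
  by rewrite -xsS; apply/eqP/primitive_isotropic_eigen => //; apply: iso (ltnW j_lt).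
have [mu conf0] := conf 0%N isT.
exists mu; elim=> [//|j IH] j_lt.
have [mu' conf'] := conf j.+1 j_lt.
suff -> : mu = mu' by [].
apply: (mulIf (step_neq0 j (ltnW j_lt))).
have := conf' (xs j); have := IH (ltnW j_lt) (xs j.+1); rewrite !xsS => e1 e2.
by rewrite -e1 lformC e2 lformC.
Qed.

Lemma primitive_strict : strictly_positive_map (A ^+ m.+1).
Proof.
move=> x x_L x_neq0; apply: contrapT => xn_bd.
pose xs j := A ^+ j *m x.
have iso j : (j <= m.+1)%N -> lquad (xs j) = 0.
  move=> j_le; have [_ q_ge0] := (lorentzE _).1 (positive_pow A_pos j x_L).
  apply/eqP; rewrite eq_le q_ge0 andbT leNgt; apply/negP => q_gt0.
  apply: xn_bd; have -> : A ^+ m.+1 *m x = A ^+ (m.+1 - j) *m xs j.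
    by rewrite /xs mulmxA mulmxE -exprD subnK.
  apply: primitive_pow_interior; apply/interior_lorentzE; split=> //.
  exact: lastc_gt0 (positive_pow A_pos j x_L) (primitive_pow_neq0 j x_L x_neq0).
have [mu conf] := primitive_orbit_conformal x_L x_neq0 iso.
have conf_all := orbit_in_subspace (conformal_at0 A mu) (@conformal_at_lincomb _ _ A mu) conf.
have iso_all j : lquad (xs j) = 0.
  elim: j => [|j IH]; first exact: iso.
  by rewrite /xs mulmx_exprS /lquad conf_all -/(lquad _) IH mulr0.
have /interior_lorentzE [_] := Ak_strict x_L x_neq0.
by rewrite iso_all ltxx.
Qed.

End PrimitiveMap.

Section ShiftExample.
Variables (R : realType) (p : nat).
Local Notation V := 'cV[R]_p.+2.
Local Notation L := (@lorentz R p.+2).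

Definition coord (z : V) (k : nat) : R := z (inord k) 0.
Arguments coord z k%_N.

Definition pair_row (c1 c2 : R) (a1 a2 j : nat) : R :=
  c1 * (j == a1)%:R + c2 * (j == a2)%:R.
Arguments pair_row c1 c2 (a1 a2 j)%_N.

(* With 0-based coordinates and t = z_{p+1}:  (A z)_{p+1} = (3 t - z_0) / 2,
   (A z)_0 = - (t + z_0) / 2,  (A z)_1 = t - z_0  and  (A z)_i = z_{i-1} for
   2 <= i <= p.  So A shifts the register feed z = (t - z_0, z_1, ..., z_p)
   one step, refills its first slot with 2 t, and q (A z) = q z + (feed z)_p^2. *)
Definition shift_entry (i j : nat) : R :=
  if i == p.+1 then pair_row (3 / 2) (- (1 / 2)) p.+1 0 j
  else if i == 0%N then pair_row (- (1 / 2)) (- (1 / 2)) p.+1 0 j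
  else if i == 1%N then pair_row 1 (-1) p.+1 0 j
  else pair_row 1 0 i.-1 0 j.

Definition shift_mx : 'M[R]_p.+2 := \matrix_(i, j) shift_entry i j.

Definition feed (z : V) (j : nat) : R :=
  if j == 0%N then coord z p.+1 - coord z 0 else coord z j.
Arguments feed z j%_N.

Lemma lastc_coord (z : V) : lastc z = coord z p.+1.
Proof. by rewrite /lastc /coord; congr (z _ 0); apply: val_inj; rewrite /= inordK. Qed.

Lemma sum_pair_row (z : V) c1 c2 a1 a2 : (a1 < p.+2)%N -> (a2 < p.+2)%N ->
  \sum_(j < p.+2) pair_row c1 c2 a1 a2 j * z j 0 = c1 * coord z a1 + c2 * coord z a2.
Proof.
have sum_delta c a : (a < p.+2)%N -> \sum_(j < p.+2) c * (j == a :> nat)%:R * z j 0 = c * coord z a.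
  move=> a_lt; rewrite (bigD1 (inord a)) //= big1 ?addr0 => [|j j_neq].
    by rewrite inordK // eqxx mulr1.
  have /negbTE -> : val j != a by apply: contra j_neq => /eqP <-; rewrite -val_eqE /= inordK.
  by rewrite mulr0 mul0r.
move=> a1_lt a2_lt; rewrite -!sum_delta // -big_split /=.
by apply: eq_bigr => j _; rewrite /pair_row mulrDl.
Qed.

Lemma coord_shift (z : V) i : (i < p.+2)%N ->
  coord (shift_mx *m z) i = \sum_(j < p.+2) shift_entry i j * z j 0.
Proof. by move=> i_lt; rewrite /coord mxE; apply: eq_bigr => j _; rewrite mxE inordK. Qed.

Lemma coord_shift_last (z : V) : coord (shift_mx *m z) p.+1 = 3 / 2 * lastc z - 1 / 2 * coord z 0.
Proof. by rewrite coord_shift // /shift_entry eqxx sum_pair_row // lastc_coord; ring. Qed.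

Lemma coord_shift_first (z : V) : coord (shift_mx *m z) 0 = - (1 / 2) * lastc z - 1 / 2 * coord z 0.
Proof. by rewrite coord_shift // /shift_entry /= sum_pair_row // lastc_coord; ring. Qed.

Lemma coord_shift_mid (z : V) i : (0 < i <= p)%N -> coord (shift_mx *m z) i = feed z i.-1.
Proof.
case/andP=> i_gt0 i_le; rewrite coord_shift /shift_entry /feed; last by lia.
have /negbTE -> : i != p.+1 by lia.
case: i i_gt0 i_le => [//|[|i]] _ i_le /=; first by rewrite sum_pair_row //; ring.
by rewrite sum_pair_row ?mul1r ?mul0r ?addr0 //; lia.
Qed.

Lemma spatial_sq_feed (z : V) :
  spatial_sq z = coord z 0 ^+ 2 + \sum_(0 <= k < p) feed z k.+1 ^+ 2.
Proof.
rewrite /spatial_sq big_mkcond big_ord_recr /= eqxx addr0 big_ord_recl big_mkord /=.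
congr (_ + _); first by rewrite /coord; congr (z _ 0 ^+ 2); apply: val_inj; rewrite /= inordK.
apply: eq_bigr => k _; have := ltn_ord k; rewrite /feed /coord /bump /= => k_lt.
rewrite ifT; last by lia.
by congr (z _ 0 ^+ 2); apply: val_inj; rewrite /= inordK ?add1n //; lia.
Qed.

Lemma lquad_shift (z : V) : lquad (shift_mx *m z) = lquad z + feed z p ^+ 2.
Proof.
have shifted : \sum_(0 <= k < p) feed (shift_mx *m z) k.+1 ^+ 2 = \sum_(0 <= k < p) feed z k ^+ 2.
  by apply: eq_big_nat => k k_lt; rewrite {1}/feed /= coord_shift_mid //; lia.
have telescope : \sum_(0 <= k < p) feed z k ^+ 2 =
    feed z 0 ^+ 2 + \sum_(0 <= k < p) feed z k.+1 ^+ 2 - feed z p ^+ 2.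
  have recl : \sum_(0 <= k < p.+1) feed z k ^+ 2 =
      feed z 0 ^+ 2 + \sum_(0 <= k < p) feed z k.+1 ^+ 2 by exact: big_nat_recl.
  by rewrite -recl big_nat_recr //= addrK.
have feed0 : feed z 0 = lastc z - coord z 0 by rewrite lastc_coord.
rewrite !lquadE !spatial_sq_feed shifted telescope feed0 [lastc (_ *m _)]lastc_coord.
rewrite coord_shift_last coord_shift_first.
by move: (\sum_(0 <= k < p) _) => S; field.
Qed.

Lemma feed_shift0 (z : V) : feed (shift_mx *m z) 0 = 2 * lastc z.
Proof. by rewrite /feed /= coord_shift_last coord_shift_first; field. Qed.

Lemma feed_shift (z : V) j : (0 < j <= p)%N -> feed (shift_mx *m z) j = feed z j.-1.
Proof. by case/andP=> j_gt0 j_le; rewrite {1}/feed gtn_eqF // coord_shift_mid ?j_gt0. Qed.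

Lemma feed_shift_pow (z : V) i j : (i <= j <= p)%N ->
  feed (shift_mx ^+ i *m z) j = feed z (j - i).
Proof.
elim: i z j => [|i IH] z j /andP [i_le j_le]; first by rewrite expr0 mul1mx subn0.
rewrite mulmx_exprSr IH ?feed_shift ?subnS //; lia.
Qed.

Lemma shift_positive : positive_map shift_mx.
Proof.
move=> z /lorentzE [t_ge0 q_ge0]; apply/lorentzE; split; last first.
  by rewrite lquad_shift addr_ge0 ?sqr_ge0.
have feed_ge0 : 0 <= \sum_(0 <= k < p) feed z k.+1 ^+ 2.
  by apply: sumr_ge0 => k _; apply: sqr_ge0.
move: q_ge0; rewrite lquadE spatial_sq_feed [lastc (_ *m _)]lastc_coord coord_shift_last.
move=> q_ge0; have : coord z 0 <= lastc z by nra.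
lra.
Qed.

Lemma shift_strict : strictly_positive_map (shift_mx ^+ p.+2).
Proof.
move=> z z_L z_neq0; apply/interior_lorentzE.
have t_gt0 := lastc_gt0 z_L z_neq0.
have [_ q_ge0] := (lorentzE _).1 (positive_pow shift_positive p.+1 z_L).
have q_gt0 : 0 < lquad (shift_mx ^+ p.+2 *m z).
  rewrite mulmx_exprS lquad_shift [in feed _ _]mulmx_exprSr feed_shift_pow ?leqnn //.
  by rewrite subnn feed_shift0 ltr_pwDr // exprn_gt0 // mulr_gt0.
split=> //; have [t_ge0 _] := (lorentzE _).1 (positive_pow shift_positive p.+2 z_L).
rewrite lt_neqAle t_ge0 andbT; apply: contraTneq q_gt0 => /esym t_eq0.
by rewrite -leNgt lquad_le0.
Qed.

Definition null_vec : V := \col_i ((val i == 0%N) || (val i == p.+1))%:R.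

Lemma coord_null_vec k : (k < p.+2)%N -> coord null_vec k = ((k == 0%N) || (k == p.+1))%:R.
Proof. by move=> k_lt; rewrite /coord mxE /= inordK. Qed.

Lemma lastc_null_vec : lastc null_vec = 1.
Proof. by rewrite lastc_coord coord_null_vec // eqxx orbT. Qed.

Lemma feed_null_vec j : (j <= p)%N -> feed null_vec j = 0.
Proof.
case: j => [|j] j_le; first by rewrite /feed /= !coord_null_vec //= eqxx subrr.
by rewrite /feed /= coord_null_vec /= ?eqSS ?ltn_eqF //; lia.
Qed.

Lemma lquad_null_vec : lquad null_vec = 0.
Proof.
rewrite lquadE spatial_sq_feed lastc_null_vec coord_null_vec // big_nat_cond big1 ?addr0 ?subrr //.
by move=> k /andP [/andP [_ k_lt] _]; rewrite feed_null_vec ?expr0n.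
Qed.

Lemma lquad_shift_pow_null_vec j : (j <= p.+1)%N -> lquad (shift_mx ^+ j *m null_vec) = 0.
Proof.
elim: j => [_|j IH j_le]; first by rewrite expr0 mul1mx lquad_null_vec.
rewrite mulmx_exprS lquad_shift IH ?feed_shift_pow ?feed_null_vec ?expr0n ?addr0 //; lia.
Qed.

Lemma shift_not_strict j : (j < p.+2)%N -> ~ strictly_positive_map (shift_mx ^+ j).
Proof.
move=> j_lt j_strict.
have null_L : L null_vec by apply/lorentzE; rewrite lastc_null_vec lquad_null_vec.
have null_neq0 : null_vec != 0.
  apply/eqP => /(congr1 (@lastc _ _)).
  by rewrite lastc_null_vec /lastc mxE => /eqP; rewrite oner_eq0.
have /interior_lorentzE [_] := j_strict _ null_L null_neq0.
by rewrite lquad_shift_pow_null_vec ?ltxx.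
Qed.

End ShiftExample.

Lemma identity_strict (R : realType) : strictly_positive_map (1 : 'M[R]_1).
Proof.
move=> x x_L x_neq0; rewrite mul1mx; apply/interior_lorentzE.
split; first exact: lastc_gt0.
by rewrite lquadE /spatial_sq big_pred0 ?subr0 ?exprn_gt0 ?lastc_gt0 // => i; rewrite ord1.
Qed.

Theorem theorem1 (R : realType) (n : nat) (hn : (1 <= n)%N) :
  (forall (A : 'M[R]_n) (k : nat),
      primitive_map A -> is_primitivity_index A k -> (k <= n)%N) /\
  (exists A : 'M[R]_n, primitive_map A /\ is_primitivity_index A n).
Proof.
case: n hn => [//|m] _; split.
  move=> A k [A_pos _] [k_gt0 Ak_strict k_min]; rewrite leqNgt; apply/negP => m_lt_k.
  exact: k_min m.+1 _ m_lt_k (primitive_strict A_pos k_gt0 Ak_strict).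
case: m => [|p].
  have one_strict : strictly_positive_map (1 ^+ 1 : 'M[R]_1).
    by rewrite expr1; apply: identity_strict.
  exists 1; split; last by split=> // -[|j].
  by split; [move=> x x_L; rewrite mul1mx | exists 1%N].
have shift_strict := @shift_strict R p.
exists (shift_mx R p); split; last by split=> // j _; apply: shift_not_strict.
by split; [exact: shift_positive | exists p.+2].
Qed.
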